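(* Let $n,m,k$ be integers with $1\le k<m/2$. If $n$ and $m$ are sufficiently large, then $R_0(h_{k,n,m})=\Omega(nm)$.
   Context: Let $n,m$ be positive integers, $1\le k<m$ an integer, $M=[n]\times[m]$ (a grid of cells with $n$ rows and $m$ columns), $\tilde M=M\cup\{\bot\}$ (pointers to cells, $\bot$ the null pointer). Let $T$ be the following fixed binary tree with $m$ leaves and $m-1$ internal nodes: if $m=2^r$, $T$ is the complete binary tree with $2^r$ leaves; if $2^r<m<2^{r+1}$, take the complete binary tree with $2^r$ leaves and add a pair of children to each of its $m-2^r$ leftmost leaves. Outgoing arcs are labeled 'left'/'right', leaves labeled $1,\dots,m$ from left to right, and $T(j)$ is the sequence of labels on the root-to-leaf-$j$ path. The alphabet is $\Sigma=\{0,1\}\times\tilde M\times\tilde M\times\tilde M$ with components $\mathrm{val},\mathrm{lpoint},\mathrm{rpoint},\mathrm{ipoint}$. The function $h_{k,n,m}\colon\Sigma^M\to\{0,1\}$ has $h_{k,n,m}(x)=1$ iff: (1) there are exactly $k$ columns $b_1,\dots,b_k$ with $\mathrm{val}(x_{i,b_s})=1$ for all $i\in[n]$, $s\in[k]$ (marked columns); (2) each marked column $b_s$ contains a unique cell $a_s$ with $x_{a_s}\ne(1,\bot,\bot,\bot)$ (special elements); (3) $\mathrm{ipoint}(x_{a_s})=a_{s+1}$ for $s\in[k-1]$, $\mathrm{ipoint}(x_{a_k})=a_1$, and $\mathrm{lpoint}(x_{a_s})=\mathrm{lpoint}(x_{a_t})$, $\mathrm{rpoint}(x_{a_s})=\mathrm{rpoint}(x_{a_t})$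 for all $s,t\in[k]$; (4) for each non-marked column $j$, the path starting at a special element and following $\mathrm{lpoint},\mathrm{rpoint}$ as specified by $T(j)$ exists (no $\bot$ on it) and ends at a cell $\ell_j$ in column $j$ with $\mathrm{val}(x_{\ell_j})=0$. A query returns the symbol $x_c\in\Sigma$ of one cell. $R_0(f)$ is the minimum, over randomized decision trees always outputting $f(x)$, of the worst-case expected number of queries. *)

From Stdlib Require Import Reals.
From mathcomp Require Import all_boot.

Set Implicit Arguments.
Unset Strict Implicit.
Unset Printing Implicit Defensive.

(* M = [n] x [m]  (rows and columns are 0-indexed ordinals) *)
Definition cell (n m : nat) : finType := ('I_n * 'I_m)%type.

(* Sigma = {0,1} x ~M x ~M x ~M, with ~M = option M (None = the null pointer) *)
Definition sym (n m : nat) : finType :=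
  (bool * option (cell n m) * option (cell n m) * option (cell n m))%type.

Definition valS {n m} (s : sym n m) : bool := s.1.1.1.
Definition lpoint {n m} (s : sym n m) : option (cell n m) := s.1.1.2.
Definition rpoint {n m} (s : sym n m) : option (cell n m) := s.1.2.
Definition ipoint {n m} (s : sym n m) : option (cell n m) := s.2.

Definition blank {n m} : sym n m := (true, None, None, None).

Inductive btree := BLeaf | BNode of btree & btree.

Fixpoint complete (r : nat) : btree :=
  if r is r'.+1 then BNode (complete r') (complete r') else BLeaf.

(* add a pair of children to each of the t leftmost leaves;
   returns the new tree and the number of expansions still to be done *)
Fixpoint expand (t : nat) (b : btree) : btree * nat :=
  match b with
  | BLeaf => if t is t'.+1 then (BNode BLeaf BLeaf, t') else (BLeaf, 0)
  | BNode l r =>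
      let (l', t1) := expand t l in
      let (r', t2) := expand t1 r in
      (BNode l' r', t2)
  end.

(* T: with r = floor(log2 m), 2^r <= m < 2^(r+1) *)
Definition Ttree (m : nat) : btree :=
  let r := trunc_log 2 m in (expand (m - 2 ^ r) (complete r)).1.

(* root-to-leaf label sequences of the leaves, from left to right;
   false = 'left', true = 'right' *)
Fixpoint leaf_paths (b : btree) : seq (seq bool) :=
  match b with
  | BLeaf => [:: [::]]
  | BNode l r => map (cons false) (leaf_paths l) ++ map (cons true) (leaf_paths r)
  end.

(* T(j) for the column j : 'I_m, i.e. the leaf with label j+1 *)
Definition Tpath (m : nat) (j : 'I_m) : seq bool := nth [::] (leaf_paths (Ttree m)) j.

Fixpoint follow {n m} (x : cell n m -> sym n m) (c : cell n m) (p : seq bool)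
  : option (cell n m) :=
  match p with
  | [::] => Some c
  | d :: p' =>
      match (if d then rpoint (x c) else lpoint (x c)) with
      | Some c' => follow x c' p'
      | None => None
      end
  end.

Definition marked {n m} (x : cell n m -> sym n m) (j : 'I_m) : Prop :=
  forall i : 'I_n, valS (x (i, j)) = true.

Definition h_holds (k n m : nat) (x : cell n m -> sym n m) : Prop :=
  exists (b : 'I_k -> 'I_m) (a : 'I_k -> cell n m),
    injective b /\
    (forall j : 'I_m, marked x j <-> exists s, b s = j) /\
    (forall s : 'I_k,
        (a s).2 = b s /\ x (a s) <> blank /\
        (forall i : 'I_n, x (i, b s) <> blank -> i = (a s).1)) /\
    (forall s : 'I_k, ipoint (x (a s)) = Some (a (ordS s))) /\
    (forall s t : 'I_k, lpoint (x (a s)) = lpoint (x (a t)) /\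
                        rpoint (x (a s)) = rpoint (x (a t))) /\
    (forall j : 'I_m, ~ marked x j ->
       forall s : 'I_k, exists l : cell n m,
         follow x (a s) (Tpath j) = Some l /\ l.2 = j /\ valS (x l) = false).

Arguments h_holds : clear implicits.

Inductive dtree (A S : Type) :=
  | DLeaf of bool
  | DQuery of A & (S -> dtree A S).

Fixpoint dt_eval {A S} (t : dtree A S) (x : A -> S) : bool :=
  match t with
  | DLeaf b => b
  | DQuery c f => dt_eval (f (x c)) x
  end.

Fixpoint dt_cost {A S} (t : dtree A S) (x : A -> S) : nat :=
  match t with
  | DLeaf _ => 0
  | DQuery c f => (dt_cost (f (x c)) x).+1
  end.

(* a randomized decision tree: a finitely supported probability
   distribution over deterministic decision trees *)
Definition rdtree (A S : Type) := list (R * dtree A S).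

Fixpoint total_weight {A S} (D : rdtree A S) : R :=
  match D with
  | [::] => R0
  | (w, _) :: D' => Rplus w (total_weight D')
  end.

Fixpoint exp_cost {A S} (D : rdtree A S) (x : A -> S) : R :=
  match D with
  | [::] => R0
  | (w, t) :: D' => Rplus (Rmult w (INR (dt_cost t x))) (exp_cost D' x)
  end.

Definition zero_error_for {A S} (f : (A -> S) -> Prop) (D : rdtree A S) : Prop :=
  (forall wt, List.In wt D -> Rle R0 wt.1 /\
                 forall x, dt_eval wt.2 x = true <-> f x) /\
  total_weight D = R1.

From Stdlib Require Import Reals Lra.
From mathcomp Require Import all_boot zify.

Set Implicit Arguments.
Unset Strict Implicit.
Unset Printing Implicit Defensive.

(* Consider the inputs [hard_input f], [f : 'I_m -> 'I_n], whose column [j] has a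
   single 0-cell, at row [f j], all other cells being blank; h rejects them all.  If a
   tree rejecting [hard_input f] makes fewer than [nm/8] queries and finds the 0-cell
   of fewer than [m - k] columns, pick [k] columns whose 0-cell it missed: making these
   0-cells the special elements, the other 0-cells the leaves of T and unqueried cells
   of unmarked columns its inner nodes gives an input accepted by h that agrees with
   every query, a contradiction.  Locating the 0-cell of a column whose row is uniform
   costs about [n/2] queries in that column, so for uniform [f] the expected number of
   queries is at least [nm/20]; averaging over the trees of a randomized decision tree
   concludes. *)

(** * Decision trees and the tree T *)

Fixpoint queries {A S} (t : dtree A S) (x : A -> S) : seq A :=
  if t is DQuery c f then c :: queries (f (x c)) x else [::].

Lemma dt_cost_queries {A S} (t : dtree A S) x : dt_cost t x = size (queries t x).
Proof. by elim: t => //= c f ->. Qed.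

Lemma dt_eval_agree (A : eqType) S (t : dtree A S) (x y : A -> S) :
  {in queries t x, y =1 x} -> dt_eval t y = dt_eval t x.
Proof.
elim: t => //= c f IH yx; rewrite yx ?mem_head //.
by apply: IH => c' Hc'; apply: yx; rewrite in_cons Hc' orbT.
Qed.

Lemma size_leaf_paths_complete r : size (leaf_paths (complete r)) = 2 ^ r.
Proof. by elim: r => //= r IH; rewrite size_cat !size_map IH expnS mul2n addnn. Qed.

Lemma size_leaf_paths_expand t b :
  size (leaf_paths (expand t b).1) = size (leaf_paths b) + minn t (size (leaf_paths b))
  /\ (expand t b).2 = t - size (leaf_paths b).
Proof.
elim: b t => [|l IHl r IHr] t /=; first by case: t => [|t] /=; lia.
case El: (expand t l) => [l' t1]; case Er: (expand t1 r) => [r' t2] /=.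
have [sl tl] := IHl t; rewrite El /= in sl tl.
have [sr tr] := IHr t1; rewrite Er /= in sr tr.
rewrite !size_cat !size_map sl sr tr tl; lia.
Qed.

Lemma size_leaf_paths_Ttree m : 0 < m -> size (leaf_paths (Ttree m)) = m.
Proof.
move=> m_gt0; rewrite /Ttree.
have lo := trunc_logP (isT : 1 < 2) m_gt0.
have hi := trunc_log_ltn m (isT : 1 < 2); rewrite expnS in hi.
have [-> _] := size_leaf_paths_expand (m - 2 ^ trunc_log 2 m) (complete (trunc_log 2 m)).
rewrite size_leaf_paths_complete; lia.
Qed.

Lemma size_leaf_paths_gt0 b : 0 < size (leaf_paths b).
Proof. by elim: b => //= l IHl r IHr; rewrite size_cat !size_map addn_gt0 IHl. Qed.

Lemma leaf_paths_uniq b : uniq (leaf_paths b).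
Proof.
elim: b => //= l IHl r IHr.
rewrite cat_uniq !map_inj_uniq ?IHl ?IHr ?andbT //=; try by move=> ? ? [].
by apply/hasP => -[q /mapP [? _ ->] /mapP [? _]].
Qed.

Fixpoint inner_paths (b : btree) : seq (seq bool) :=
  if b is BNode l r
  then [::] :: map (cons false) (inner_paths l) ++ map (cons true) (inner_paths r)
  else [::].

Lemma size_inner_paths b : size (inner_paths b) = (size (leaf_paths b)).-1.
Proof.
elim: b => //= l IHl r IHr; rewrite !size_cat !size_map IHl IHr.
by have := size_leaf_paths_gt0 l; have := size_leaf_paths_gt0 r; lia.
Qed.

Lemma leaf_path_notin_inner b q : q \in leaf_paths b -> q \notin inner_paths b.
Proof.
elim: b q => //= l IHl r IHr q.
rewrite mem_cat in_cons mem_cat !negb_or.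
have cons_inj d : injective (cons d) by move=> ? ? [].
case/orP=> /mapP [q' Hq' ->]; rewrite /= (mem_map (cons_inj _ _)).
  by rewrite IHl //=; apply/negP => /mapP [? _ []].
by rewrite IHr // andbT; apply/negP => /mapP [? _ []].
Qed.

Definition ptr {n m} (d : bool) (s : sym n m) := if d then rpoint s else lpoint s.

Lemma follow_labelled n m (x : cell n m -> sym n m) (G : seq bool -> cell n m) b p :
  (forall q, q \in inner_paths b -> forall d,
      ptr d (x (G (p ++ q))) = Some (G (p ++ rcons q d))) ->
  forall q, q \in leaf_paths b -> follow x (G p) q = Some (G (p ++ q)).
Proof.
elim: b p => [|l IHl r IHr] p G_inner q /=; first by rewrite inE => /eqP ->; rewrite cats0.
have G_root := G_inner [::] (mem_head _ _); rewrite cats0 /= in G_root.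
rewrite mem_cat => /orP [] /mapP [q' Hq' ->] /=.
- move: (G_root false) => /= ->; rewrite cats1 -cat_rcons; apply: IHl => // q'' Hq'' d.
  by rewrite !cat_rcons; apply: G_inner; rewrite /= inE mem_cat map_f.
- move: (G_root true) => /= ->; rewrite cats1 -cat_rcons; apply: IHr => // q'' Hq'' d.
  by rewrite !cat_rcons; apply: G_inner; rewrite /= inE mem_cat map_f ?orbT.
Qed.

Definition nonroot_inner m := behead (inner_paths (Ttree m)).

Lemma Ttree_node m : 1 < m -> exists l r, Ttree m = BNode l r.
Proof.
case E: (Ttree m) => [|l r] m_gt1; last by exists l, r.
by have := size_leaf_paths_Ttree (ltnW m_gt1); rewrite E => m1; rewrite -m1 in m_gt1.
Qed.

Lemma size_nonroot_inner m : 1 < m -> size (nonroot_inner m) = m - 2.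
Proof.
move=> m_gt1; have [l [r E]] := Ttree_node m_gt1.
have := size_inner_paths (Ttree m).
by rewrite /nonroot_inner size_leaf_paths_Ttree ?(ltnW m_gt1) // E /=; lia.
Qed.

Lemma mem_nonroot_inner m p : p \in inner_paths (Ttree m) -> p != [::] -> p \in nonroot_inner m.
Proof. by rewrite /nonroot_inner; case: (Ttree m) => //= l r; rewrite inE => /orP [->|]. Qed.

Lemma Tpath_mem m (j : 'I_m) : Tpath j \in leaf_paths (Ttree m).
Proof. by rewrite /Tpath mem_nth // size_leaf_paths_Ttree //; apply: leq_ltn_trans (ltn_ord j). Qed.

Lemma Tpath_inj m : injective (@Tpath m).
Proof.
move=> j1 j2 E; apply/val_inj/eqP.
have m_gt0 : 0 < m by apply: leq_ltn_trans (ltn_ord j1).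
rewrite -(nth_uniq [::] _ _ (leaf_paths_uniq (Ttree m))) ?size_leaf_paths_Ttree ?ltn_ord //.
by apply/eqP; apply: E.
Qed.

Lemma Tpath_notin_nonroot m (j : 'I_m) : Tpath j \notin nonroot_inner m.
Proof. by apply: contra (leaf_path_notin_inner (Tpath_mem j)); apply: mem_behead. Qed.

Lemma Tpath_neq_nil m (j : 'I_m) : 1 < m -> Tpath j != [::].
Proof.
move=> m_gt1; have [l [r E]] := Ttree_node m_gt1; have := Tpath_mem j; rewrite E /=.
by rewrite mem_cat => /orP [] /mapP [p _ ->].
Qed.

(** * Hard inputs and the cost of searching a column *)

Definition zero_sym {n m} : sym n m := (false, None, None, None).

Definition hard_input n m (f : {ffun 'I_m -> 'I_n}) (c : cell n m) : sym n m :=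
  if c.1 == f c.2 then zero_sym else blank.

Lemma hard_input_not_h n m k (f : {ffun 'I_m -> 'I_n}) : 0 < k -> ~ h_holds k n m (hard_input f).
Proof.
move=> k_gt0 [b [_ [_ [marked_b _]]]].
have := proj2 (marked_b (b (Ordinal k_gt0))) (ex_intro _ _ erefl) (f (b (Ordinal k_gt0))).
by rewrite /hard_input /= eqxx.
Qed.

Definition ffun_set n m (f : {ffun 'I_m -> 'I_n}) (j : 'I_m) (r : 'I_n) : {ffun 'I_m -> 'I_n} :=
  [ffun j' => if j' == j then r else f j'].

Lemma ffun_set_id n m (f : {ffun 'I_m -> 'I_n}) j : ffun_set f j (f j) = f.
Proof. by apply/ffunP => j'; rewrite ffunE; case: eqP => // ->. Qed.

Lemma ffun_set_set n m (f : {ffun 'I_m -> 'I_n}) j r r' :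
  ffun_set (ffun_set f j r) j r' = ffun_set f j r'.
Proof. by apply/ffunP => j'; rewrite !ffunE; case: eqP. Qed.

Lemma ffun_set_at n m (f : {ffun 'I_m -> 'I_n}) j r : ffun_set f j r j = r.
Proof. by rewrite ffunE eqxx. Qed.

Lemma ffun_set_eq n m (f : {ffun 'I_m -> 'I_n}) j r : (ffun_set f j r == f) = (f j == r).
Proof. by apply/eqP/eqP => [<-|<-]; [apply: ffun_set_at | apply: ffun_set_id]. Qed.

Lemma sum_ffun_set n m (F : {ffun 'I_m -> 'I_n} -> nat) j :
  \sum_(f : {ffun 'I_m -> 'I_n}) \sum_(r : 'I_n) F (ffun_set f j r)
  = n * \sum_(f : {ffun 'I_m -> 'I_n}) F f.
Proof.
have fiber r : \sum_(f : {ffun 'I_m -> 'I_n}) F (ffun_set f j r)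
             = n * \sum_(f : {ffun 'I_m -> 'I_n} | f j == r) F f.
  rewrite (partition_big (fun f : {ffun 'I_m -> 'I_n} => f j) predT) //=.
  rewrite (eq_bigr (fun _ => \sum_(f : {ffun 'I_m -> 'I_n} | f j == r) F f)) => [|r' _].
    by rewrite sum_nat_const card_ord.
  rewrite (reindex_onto (fun f => ffun_set f j r') (fun f => ffun_set f j r)); last first.
    by move=> f /eqP <-; rewrite ffun_set_set; apply: ffun_set_id.
  apply: eq_big => f; first by rewrite ffun_set_at eqxx ffun_set_set ffun_set_eq.
  by rewrite ffun_set_set => /andP [_ /eqP ->].
rewrite exchange_big (eq_bigr _ (fun r _ => fiber r)) -big_distrr /=.
by rewrite [in RHS](partition_big (fun f : {ffun 'I_m -> 'I_n} => f j) predT).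
Qed.

Definition in_col n m (j : 'I_m) : pred (cell n m) := fun c => c.2 == j.

Section ColumnSearch.

Variables (n m : nat) (j : 'I_m) (y : cell n m -> sym n m) (x : 'I_n -> cell n m -> sym n m).
Hypothesis x_off_col : forall r c, c.2 != j -> x r c = y c.
Hypothesis x_col : forall r i, i != r -> x r (i, j) = blank.

(* Invariant of the search: [R] is the set of rows of column [j] not probed yet, and
   [size R * (n - size R)] is a credit for the probes already made. *)
Lemma search_column_cost (t : dtree (cell n m) (sym n m)) (R : seq 'I_n) :
  uniq R -> size R <= n ->
  n * \sum_(r <- R) ((r, j) \in queries t (x r))
  <= 2 * \sum_(r <- R) count (in_col j) (queries t (x r)) + size R * (n - size R).
Proof.
elim: t R => [b|[i j'] k IH] R uR sR; first by rewrite /= big1_seq ?muln0.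
case: (eqVneq j' j) => [->|j'j]; last first.
  have found r : ((r, j) \in queries (DQuery (i, j') k) (x r))
               = ((r, j) \in queries (k (y (i, j'))) (x r)).
    by rewrite /= x_off_col // in_cons xpair_eqE (eq_sym j) (negbTE j'j) andbF.
  have cnt r : count (in_col j) (queries (DQuery (i, j') k) (x r))
             = count (in_col j) (queries (k (y (i, j'))) (x r)).
    by rewrite /= x_off_col // /in_col /= (negbTE j'j).
  rewrite (eq_bigr _ (fun r _ => congr1 nat_of_bool (found r))).
  by rewrite (eq_bigr _ (fun r _ => cnt r)) IH.
have found r : r != i -> ((r, j) \in queries (DQuery (i, j) k) (x r))
                         = ((r, j) \in queries (k blank) (x r)).
  by move=> ri; rewrite /= x_col 1?eq_sym // in_cons xpair_eqE eqxx andbT (negbTE ri).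
have cnt r : r != i -> count (in_col j) (queries (DQuery (i, j) k) (x r))
                       = count (in_col j) (queries (k blank) (x r)) + 1.
  by move=> ri; rewrite /= x_col 1?eq_sym // /in_col /= eqxx addn1.
case Ri: (i \in R); last first.
  have ri r : r \in R -> r != i by apply: contraTneq => ->; rewrite Ri.
  rewrite (eq_big_seq _ (fun r rR => congr1 nat_of_bool (found r (ri r rR)))).
  rewrite (eq_big_seq _ (fun r rR => cnt r (ri r rR))).
  apply: leq_trans (IH blank R uR sR) _; rewrite leq_add2r leq_mul2l; apply/orP; right.
  by apply: leq_sum => r _; rewrite leq_addr.
have uR' : uniq (rem i R) by apply: rem_uniq.
have ri r : r \in rem i R -> r != i by rewrite mem_rem_uniq // => /andP [].
rewrite !(perm_big _ (perm_to_rem Ri)) !big_cons.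
rewrite (eq_big_seq _ (fun r rR => congr1 nat_of_bool (found r (ri r rR)))).
rewrite (eq_big_seq _ (fun r rR => cnt r (ri r rR))).
have col_ij : in_col j (i, j) by rewrite /in_col eqxx.
rewrite /= mem_head col_ij.
have sR' : size (rem i R) = (size R).-1 by rewrite size_rem.
have R_gt0 : 0 < size R by case: (R) Ri.
have := IH blank _ uR'; rewrite sR' big_split sum1_size sR' => /(_ ltac:(lia)) /=.
nia.
Qed.

End ColumnSearch.

Lemma sum_zero_found_col_le n m (t : dtree (cell n m) (sym n m)) (j : 'I_m) : 0 < n ->
  n * \sum_(f : {ffun 'I_m -> 'I_n}) ((f j, j) \in queries t (hard_input f))
  <= 2 * \sum_(f : {ffun 'I_m -> 'I_n}) count (in_col j) (queries t (hard_input f)).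
Proof.
move=> n_gt0; rewrite -(leq_pmul2l n_gt0).
rewrite -(sum_ffun_set (fun f => (f j, j) \in queries t (hard_input f)) j).
rewrite mulnCA -(sum_ffun_set (fun f => count (in_col j) (queries t (hard_input f))) j).
rewrite !big_distrr /=; apply: leq_sum => f _.
under eq_bigr => r _ do rewrite ffun_set_at.
have off_col r c : c.2 != j -> hard_input (ffun_set f j r) c = hard_input f c.
  by move=> cj; rewrite /hard_input ffunE (negbTE cj).
have on_col r i : i != r -> hard_input (ffun_set f j r) (i, j) = blank.
  by move=> ir; rewrite /hard_input /= ffun_set_at (negbTE ir).
have sz : size (index_enum 'I_n) = n by rewrite /index_enum -enumT -cardT card_ord.
have := search_column_cost off_col on_col t (index_enum_uniq 'I_n) (eq_leq sz).
by rewrite sz subnn muln0 addn0.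
Qed.

Lemma size_sum_count_col n m (s : seq (cell n m)) : size s = \sum_(j < m) count (in_col j) s.
Proof.
elim: s => [|c s IH] /=; first by rewrite big1.
rewrite big_split /= -IH (bigD1 c.2) //= /in_col eqxx big1 ?addn0 // => j.
by rewrite eq_sym => /negbTE ->.
Qed.

Lemma sum_size_queries_hard_input_ge n m k (t : dtree (cell n m) (sym n m)) :
  0 < n -> 2 * k < m ->
  (forall f : {ffun 'I_m -> 'I_n},
      n * m <= 8 * size (queries t (hard_input f))
   \/ m - k <= \sum_j ((f j, j) \in queries t (hard_input f))) ->
  n * m * #|{ffun 'I_m -> 'I_n}|
  <= 20 * \sum_(f : {ffun 'I_m -> 'I_n}) size (queries t (hard_input f)).
Proof.
move=> n_gt0 km cost_or_found.
set Q := \sum_f _.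
pose Z := \sum_(f : {ffun 'I_m -> 'I_n}) \sum_j ((f j, j) \in queries t (hard_input f)).
have ZQ : n * Z <= 2 * Q.
  rewrite /Z exchange_big big_distrr /=.
  rewrite /Q (eq_bigr _ (fun f _ => size_sum_count_col (queries t (hard_input f)))).
  rewrite exchange_big big_distrr /=.
  by apply: leq_sum => j _; apply: sum_zero_found_col_le.
have per_f f : n * m <= 16 * size (queries t (hard_input f))
                        + 2 * n * \sum_j ((f j, j) \in queries t (hard_input f)).
  by case: (cost_or_found f); nia.
have := @leq_sum _ (index_enum {ffun 'I_m -> 'I_n}) predT _ _ (fun f _ => per_f f).
rewrite sum_nat_const big_split /= -!big_distrr /= -/Q -mulnA -/Z.
rewrite (_ : #|xpredT| = #|{ffun 'I_m -> 'I_n}|) //; nia.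
Qed.

(** * Planted inputs *)

Section PlantedInput.

Variables (n m k : nat) (f : {ffun 'I_m -> 'I_n}) (Q : seq (cell n m)) (b : 'I_k -> 'I_m).
Variable c0 : cell n m.

Definition in_marked (j : 'I_m) := [exists s, b s == j].

Definition special (s : 'I_k) : cell n m := (f (b s), b s).

Definition free_cells : {set cell n m} :=
  [set c | ~~ in_marked c.2] :\: ([set (f j, j) | j : 'I_m] :|: [set c | c \in Q]).

(* The non-root inner nodes of T are placed injectively on free cells, the leaf
   T(j) on the 0-cell of column j, and the root on all the special cells. *)
Definition node_cell (p : seq bool) : cell n m :=
  if p \in nonroot_inner m then nth c0 (enum free_cells) (index p (nonroot_inner m))
  else if [pick j : 'I_m | Tpath j == p] is Some j then (f j, j) else c0.

Definition planted (c : cell n m) : sym n m :=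
  if [pick s | special s == c] is Some s then
    (true, Some (node_cell [:: false]), Some (node_cell [:: true]), Some (special (ordS s)))
  else if index c (enum free_cells) < size (nonroot_inner m) then
    let p := nth [::] (nonroot_inner m) (index c (enum free_cells)) in
    (true, Some (node_cell (rcons p false)), Some (node_cell (rcons p true)), None)
  else hard_input f c.

Hypothesis b_inj : injective b.
Hypothesis enough_free : size (nonroot_inner m) <= #|free_cells|.

Lemma free_cellsP c : c \in free_cells -> [/\ ~~ in_marked c.2, c.1 != f c.2 & c \notin Q].
Proof.
rewrite !inE negb_or => /andP [/andP [not_zero notQ] unmarked]; split=> //.
by apply: contra not_zero => /eqP c1; apply/imsetP; exists c.2; rewrite // -c1 -surjective_pairing.
Qed.

Lemma in_marked_special s : in_marked (special s).2.
Proof. by apply/existsP; exists s. Qed.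

Lemma planted_special s : planted (special s)
  = (true, Some (node_cell [:: false]), Some (node_cell [:: true]), Some (special (ordS s))).
Proof.
rewrite /planted; case: pickP => [s' /eqP/(congr1 snd)/b_inj -> //|/(_ s)].
by rewrite eqxx.
Qed.

Lemma planted_unspecial c : ~~ in_marked c.2 -> planted c =
  if index c (enum free_cells) < size (nonroot_inner m) then
    let p := nth [::] (nonroot_inner m) (index c (enum free_cells)) in
    (true, Some (node_cell (rcons p false)), Some (node_cell (rcons p true)), None)
  else hard_input f c.
Proof.
move=> unmarked; rewrite /planted; case: pickP => // s /eqP sc.
by move: unmarked; rewrite -sc in_marked_special.
Qed.

Lemma index_not_free c :
  c \notin free_cells -> (index c (enum free_cells) < size (nonroot_inner m)) = false.
Proof.
move=> notfree; apply/negbTE; rewrite -leqNgt; apply: leq_trans enough_free _.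
by rewrite cardE memNindex // mem_enum.
Qed.

Lemma planted_queried c : (forall s, special s \notin Q) -> c \in Q -> planted c = hard_input f c.
Proof.
move=> special_notQ cQ; rewrite /planted; case: pickP => [s /eqP sc|_].
  by move: (special_notQ s); rewrite sc cQ.
by rewrite index_not_free //; apply: contraL cQ => /free_cellsP [].
Qed.

Lemma planted_zero j : ~~ in_marked j -> planted (f j, j) = zero_sym.
Proof.
move=> unmarked; rewrite planted_unspecial // index_not_free /hard_input /= ?eqxx //.
by apply/negP => /free_cellsP [_ /=]; rewrite eqxx.
Qed.

Lemma planted_marked_blank s i : i != f (b s) -> planted (i, b s) = blank.
Proof.
move=> i_ne; rewrite /planted; case: pickP => [s' /eqP [fbs bs]|_].
  by move: i_ne; rewrite -fbs bs eqxx.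
rewrite index_not_free /hard_input /= ?(negbTE i_ne) //.
by apply/negP => /free_cellsP [/= /negP []]; apply/existsP; exists s.
Qed.

Lemma planted_node p : p \in nonroot_inner m ->
  planted (node_cell p)
  = (true, Some (node_cell (rcons p false)), Some (node_cell (rcons p true)), None).
Proof.
move=> p_inner.
have p_lt : index p (nonroot_inner m) < #|free_cells|.
  by apply: leq_trans enough_free; rewrite index_mem.
have p_free : node_cell p \in free_cells.
  by rewrite /node_cell p_inner -mem_enum mem_nth // -cardE.
have index_p : index (node_cell p) (enum free_cells) = index p (nonroot_inner m).
  by rewrite /node_cell p_inner index_uniq ?enum_uniq // -cardE.
have [unmarked _ _] := free_cellsP p_free.
by rewrite planted_unspecial // index_p index_mem p_inner /= nth_index.
Qed.

Lemma node_cell_Tpath j : node_cell (Tpath j) = (f j, j).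
Proof.
rewrite /node_cell (negbTE (Tpath_notin_nonroot j)).
by case: pickP => [j' /eqP /Tpath_inj -> //|/(_ j)]; rewrite eqxx.
Qed.

Lemma marked_planted j : marked planted j <-> in_marked j.
Proof.
split=> [marked_j|/existsP [s /eqP <-] i].
  by apply: contraT => /planted_zero zero_j; move: (marked_j (f j)); rewrite zero_j.
case: (eqVneq i (f (b s))) => [->|i_ne]; last by rewrite planted_marked_blank.
by rewrite -/(special s) planted_special.
Qed.

Lemma follow_planted j s : 1 < m -> ~~ in_marked j ->
  follow planted (special s) (Tpath j) = Some (f j, j).
Proof.
move=> m_gt1 unmarked.
pose G p := if p is [::] then special s else node_cell p.
have G_tree q : q \in inner_paths (Ttree m) -> forall d,
    ptr d (planted (G ([::] ++ q))) = Some (G ([::] ++ rcons q d)).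
  case: q => [|x q] q_inner d /=; first by rewrite planted_special; case: d.
  by rewrite planted_node ?mem_nonroot_inner //; case: d.
have := follow_labelled G_tree (Tpath_mem j); rewrite /= -node_cell_Tpath.
by case: (Tpath j) (Tpath_neq_nil j m_gt1).
Qed.

Lemma planted_h : 1 < m -> h_holds k n m planted.
Proof.
move=> m_gt1; exists b, special; split=> //; split.
  move=> j; rewrite marked_planted.
  by split=> [/existsP [s /eqP]|[s <-]]; [exists s | apply/existsP; exists s].
split.
  move=> s; split=> //; split; first by rewrite planted_special.
  by move=> i; case: (eqVneq i (f (b s))) => [//|i_ne]; rewrite planted_marked_blank.
split; first by move=> s; rewrite planted_special.
split; first by move=> s t; rewrite !planted_special.
move=> j /marked_planted /negP unmarked s; exists (f j, j).
by rewrite follow_planted // planted_zero.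
Qed.

End PlantedInput.

Lemma card_free_cells n m k (f : {ffun 'I_m -> 'I_n}) Q (b : 'I_k -> 'I_m) :
  injective b -> n * (m - k) - (m + size Q) <= #|free_cells f Q b|.
Proof.
move=> b_inj; pose B := [set b s | s in 'I_k].
have unmarked_cells : [set c : cell n m | ~~ in_marked b c.2] = setX [set: 'I_n] (~: B).
  apply/setP => -[i j]; rewrite !inE; congr negb.
  by apply/existsP/imsetP => [[s /eqP <-]|[s _ ->]]; exists s.
have card_unmarked : #|[set c : cell n m | ~~ in_marked b c.2]| = n * (m - k).
  rewrite unmarked_cells cardsX cardsT card_ord; congr (_ * _).
  by have := cardsC B; rewrite card_ord card_imset // card_ord; lia.
have card_zeros : #|[set (f j, j) | j : 'I_m]| <= m.
  by apply: leq_trans (leq_imset_card _ _) _; rewrite card_ord.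
have card_Q : #|[set c | c \in Q]| <= size Q by rewrite cardsE card_size.
rewrite /free_cells cardsD card_unmarked leq_sub2l //.
apply: leq_trans (subset_leq_card (subsetIr _ _)) _.
by apply: leq_trans (leq_card_setU _ _) _; apply: leq_add.
Qed.

Lemma sum_nat_of_bool_card (T : finType) (P : pred T) : \sum_(i : T) (P i : nat) = #|P|.
Proof.
by rewrite -sum1_card [RHS]big_mkcond /=; apply: eq_bigr => i _; rewrite unfold_in; case: (P i).
Qed.

(* If both alternatives fail, the planted input marking [k] columns whose 0-cell was
   not queried agrees with [hard_input f] on all queries but is accepted. *)
Lemma query_or_find n m k (t : dtree (cell n m) (sym n m)) :
  8 <= n -> 8 <= m -> 0 < k -> 2 * k < m ->
  (forall x, dt_eval t x = true <-> h_holds k n m x) ->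
  forall f : {ffun 'I_m -> 'I_n},
     n * m <= 8 * size (queries t (hard_input f))
  \/ m - k <= \sum_j ((f j, j) \in queries t (hard_input f)).
Proof.
move=> n_ge8 m_ge8 k_gt0 km t_h f.
set Q := queries t (hard_input f).
have [|few_queries] := leqP (n * m) (8 * size Q); first by left.
have [|few_found] := leqP (m - k) (\sum_j ((f j, j) \in Q)); first by right.
exfalso; pose U := [set j : 'I_m | (f j, j) \notin Q].
have k_le_U : k <= #|U|.
  have := cardsC U; rewrite card_ord.
  have -> : #|~: U| = \sum_j ((f j, j) \in Q).
    by rewrite sum_nat_of_bool_card; apply: eq_card => j; rewrite !inE negbK.
  lia.
pose b (s : 'I_k) := enum_val (widen_ord k_le_U s).
have b_inj : injective b by move=> s s' /enum_val_inj [] /val_inj.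
have special_notQ s : special f b s \notin Q.
  by have := enum_valP (widen_ord k_le_U s); rewrite inE.
have enough_free : size (nonroot_inner m) <= #|free_cells f Q b|.
  apply: leq_trans (card_free_cells f Q b_inj); rewrite size_nonroot_inner; last lia.
  have : n * (m + 1) <= n * (2 * (m - k)) by rewrite leq_mul2l; apply/orP; right; lia.
  nia.
pose c0 := special f b (Ordinal k_gt0).
have h_planted := planted_h c0 b_inj enough_free (leq_trans (isT : 1 < 8) m_ge8).
apply: (@hard_input_not_h n m k f k_gt0); apply/t_h.
rewrite -(dt_eval_agree (y := planted f Q b c0)); first exact/t_h.
by move=> c cQ; apply: planted_queried.
Qed.

(** * Expected cost *)

Section ExpectedCost.

Local Open Scope R_scope.

Definition sumR {T} (s : seq T) (F : T -> R) : R := foldr (fun a acc => F a + acc) 0 s.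

Lemma eq_sumR {T} (s : seq T) (F G : T -> R) : F =1 G -> sumR s F = sumR s G.
Proof. by move=> FG; elim: s => //= a s ->; rewrite FG. Qed.

Lemma sumR_INR {T} (s : seq T) (h : T -> nat) :
  sumR s (fun e => INR (h e)) = INR (\sum_(e <- s) h e).
Proof. by elim: s => [|a s IH]; rewrite ?big_nil ?big_cons //= IH plus_INR. Qed.

Lemma sumR_le_size_mul {T} (s : seq T) (F : T -> R) :
  s <> [::] -> exists e, sumR s F <= INR (size s) * F e.
Proof.
elim: s => [|a [|a' s] IH] // _; first by exists a; rewrite /=; lra.
have [e Fe] := IH ltac:(by []).
have size_pos : 0 <= INR (size (a' :: s)) by apply: pos_INR.
have -> : INR (size [:: a, a' & s]) = INR (size (a' :: s)) + 1 by rewrite -S_INR.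
change (sumR [:: a, a' & s] F) with (F a + sumR (a' :: s) F).
case: (Rle_dec (F a) (F e)) => [Fae|Fea]; [exists e | exists a]; nra.
Qed.

Lemma sumR_exp_cost_cons {A S T} (s : seq T) (x : T -> A -> S) w t (D : rdtree A S) :
  sumR s (fun e => exp_cost ((w, t) :: D) (x e))
  = w * sumR s (fun e => INR (dt_cost t (x e))) + sumR s (fun e => exp_cost D (x e)).
Proof. by elim: s => [|a s IH] /=; rewrite ?IH; lra. Qed.

Lemma sumR_exp_cost_ge {A S T} (s : seq T) (x : T -> A -> S) (D : rdtree A S) (B : R) :
  (forall wt, List.In wt D -> 0 <= wt.1 /\ B <= sumR s (fun e => INR (dt_cost wt.2 (x e)))) ->
  total_weight D * B <= sumR s (fun e => exp_cost D (x e)).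
Proof.
elim: D => [|[w t] D IH] D_cost /=.
  by rewrite Rmult_0_l; elim: s {D_cost} => /= [|_ s IHs]; lra.
have [/= w_ge0 /= t_cost] := D_cost (w, t) (or_introl erefl).
have := IH (fun wt wt_in => D_cost wt (or_intror wt_in)).
rewrite sumR_exp_cost_cons /=; nra.
Qed.

(* The easy direction of Yao's principle. *)
Lemma exists_exp_cost_ge {A S T} (s : seq T) (x : T -> A -> S) (D : rdtree A S) (c : R) :
  total_weight D = 1 -> s <> [::] ->
  (forall wt, List.In wt D ->
     0 <= wt.1 /\ INR (size s) * c <= sumR s (fun e => INR (dt_cost wt.2 (x e)))) ->
  exists e, c <= exp_cost D (x e).
Proof.
move=> D_weight s_neq0 D_cost.
have := sumR_exp_cost_ge D_cost; rewrite D_weight Rmult_1_l => avg.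
have [e e_cost] := sumR_le_size_mul (fun e => exp_cost D (x e)) s_neq0.
exists e; have size_pos : 0 < INR (size s) by apply: lt_0_INR; apply/ltP; case: (s) s_neq0.
by apply: (Rmult_le_reg_l _ _ _ size_pos); lra.
Qed.

Lemma INR_inv_mul_le (p q d : nat) : (0 < d)%nat -> (p <= d * q)%nat -> / INR d * INR p <= INR q.
Proof.
move=> d_gt0 /leP/le_INR; rewrite mult_INR => pq.
have d_pos : 0 < INR d by apply: lt_0_INR; apply/ltP.
apply: (Rmult_le_reg_l _ _ _ d_pos); rewrite -Rmult_assoc Rinv_r; lra.
Qed.

End ExpectedCost.

Theorem theorem15 :
  exists c : R, Rlt R0 c /\
  exists N : nat, forall n m k : nat,
    N <= n -> N <= m -> 1 <= k -> 2 * k < m ->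
    forall D : rdtree (cell n m) (sym n m),
      zero_error_for (h_holds k n m) D ->
      exists x : cell n m -> sym n m,
        Rle (Rmult (Rmult c (INR n)) (INR m)) (exp_cost D x).
Proof.
exists (Rinv 20); split; first lra.
exists 8 => n m k n_ge8 m_ge8 k_gt0 km D [D_h D_weight].
pose inputs := index_enum {ffun 'I_m -> 'I_n}.
have size_inputs : size inputs = #|{ffun 'I_m -> 'I_n}|.
  by rewrite /inputs /index_enum -enumT -cardT.
have inputs_neq0 : inputs <> [::].
  move=> inputs0; move: size_inputs; rewrite inputs0 card_ffun !card_ord => /esym/eqP.
  by rewrite expn_eq0; lia.
have n_gt0 : 0 < n by lia.
suff [f f_cost] : exists f : {ffun 'I_m -> 'I_n},
    Rle (Rmult (Rmult (Rinv 20) (INR n)) (INR m)) (exp_cost D (hard_input f)).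
  by exists (hard_input f).
apply: (exists_exp_cost_ge D_weight inputs_neq0) => wt /D_h [w_ge0 t_h]; split=> //.
rewrite (eq_sumR _ (fun f => congr1 INR (dt_cost_queries _ _))) sumR_INR.
have := sum_size_queries_hard_input_ge n_gt0 km (query_or_find n_ge8 m_ge8 k_gt0 km t_h).
move/(INR_inv_mul_le (isT : 0 < 20)); rewrite -size_inputs !mult_INR (INR_IZR_INZ 20) /=.
by move=> bound; apply: (Rle_trans _ _ _ _ bound); right; ring.
Qed.
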